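(* For every positive integer $n$, the map $\Psi_{\mathrm{PF}\to\mathrm{Luk}}$ restricts to a bijection $\mathrm{UPF}_n^{\mathrm{inc}}\to\mathrm{Motz}_n^{\le 1}$. Moreover, $|\mathrm{UPF}_n^{\mathrm{inc}}|=|\mathrm{Motz}_n^{\le 1}|=2^{n-1}$.
   Context: Let $[n]=\{1,\dots,n\}$. A parking preference is $p=(p_1,\dots,p_n)\in[n]^n$; cars $1,\dots,n$ enter in order and car $i$ parks in the first unoccupied spot $k\ge p_i$ among spots $1,\dots,n$, failing if there is none. $p$ is a parking function if all cars park. If car $i$ parks in spot $o_i$, its displacement is $d_i=o_i-p_i$. A parking function is unit-interval if $\max_i d_i\le 1$. $\mathrm{UPF}_n^{\mathrm{inc}}$ is the set of unit-interval parking functions with $p_1\le\dots\le p_n$. A Łukasiewicz word of length $n$ is a sequence $\ell=(\ell_1,\dots,\ell_n)$ of integers $\ell_i\ge-1$ with $h(\ell;k):=\sum_{i=1}^k\ell_i\ge0$ for all $k\in[n]$ and $h(\ell;n)=0$ (viewed as the lattice path from $(0,0)$ with steps $(\ell_i+1,\ell_i)$). It is a Motzkin path if all $\ell_i\le 1$. $\mathrm{Motz}_n^{\le1}$ is the set of Motzkin paths of length $n$ of height at most one, i.e. with $h(\ell;k)\le 1$ for all $k$. $\Psi_{\mathrm{PF}\to\mathrm{Luk}}(p)=(\ell_1,\dots,\ell_n)$ with $\ell_i=|\{k\in[n]: p_k=i\}|-1$. *)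

From mathcomp Require Import all_boot all_order all_algebra.
Set Implicit Arguments. Unset Strict Implicit. Unset Printing Implicit Defensive.
Import GRing.Theory Num.Theory.

(* Spots and preferences are the naturals 1..n; a preference is a seq nat. *)

Definition first_free (n : nat) (occ : seq nat) (a : nat) : option nat :=
  ohead [seq k <- iota a (n.+1 - a) | k \notin occ].

Fixpoint park_aux (n : nat) (occ : seq nat) (p : seq nat) : option (seq nat) :=
  match p with
  | [::] => Some [::]
  | a :: p' =>
      match first_free n occ a with
      | None => None
      | Some k => omap (cons k) (park_aux n (k :: occ) p')
      end
  end.

Definition outcome (n : nat) (p : seq nat) : option (seq nat) := park_aux n [::] p.

Definition is_pref (n : nat) (p : seq nat) : bool :=
  (size p == n) && all (fun a => (1 <= a <= n)%N) p.

Definition is_PF (n : nat) (p : seq nat) : bool :=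
  is_pref n p && (outcome n p != None).

Definition is_UPF (n : nat) (p : seq nat) : bool :=
  is_pref n p &&
  (match outcome n p with
   | None => false
   | Some o => all (fun op => (op.1 - op.2 <= 1)%N) (zip o p)
   end).

Definition is_UPF_inc (n : nat) (p : seq nat) : bool :=
  is_UPF n p && sorted leq p.

Local Open Scope ring_scope.

Definition height (l : seq int) (k : nat) : int := \sum_(x <- take k l) x.

Definition is_Luk (n : nat) (l : seq int) : bool :=
  [&& size l == n, all (fun x => -1 <= x) l,
      all (fun k => 0 <= height l k) (iota 1 n) & height l n == 0].

Definition is_Motz (n : nat) (l : seq int) : bool :=
  is_Luk n l && all (fun x => x <= 1) l.

Definition is_Motz_le1 (n : nat) (l : seq int) : bool :=
  is_Motz n l && all (fun k => height l k <= 1) (iota 1 n).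

Definition Psi (n : nat) (p : seq nat) : seq int :=
  [seq (count_mem i p)%N%:Z - 1 | i <- iota 1 n].

Definition has_card (T : eqType) (P : pred T) (c : nat) : Prop :=
  exists s : seq T, [/\ uniq s, forall x, (x \in s) = P x & size s = c].

(* In a nondecreasing unit-interval parking function the cars fill the spots
   in order, so car j parks in spot j and prefers spot j - b_j for a bit b_j,
   with b_1 = 0; conversely every such bit sequence gives one, hence 2^(n-1)
   of them.  Spot i is preferred by car i iff b_i = 0 and by car i+1 iff
   b_(i+1) = 1, so Psi yields the steps b_(i+1) - b_i (with b_(n+1) = 0): the
   path whose height after k steps is b_(k+1).  Motzkin paths of height at most
   one are exactly the paths with all heights in {0, 1}, and reading the
   heights back gives the inverse. *)

From mathcomp Require Import all_boot all_order all_algebra zify.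
Set Implicit Arguments. Unset Strict Implicit. Unset Printing Implicit Defensive.
Import GRing.Theory.

Lemma ohead_filter_iota (P : pred nat) a m k :
  ohead [seq x <- iota a m | P x] = Some k <->
  [/\ a <= k < a + m, P k & forall x, a <= x < k -> ~~ P x].
Proof.
elim: m a => [|m IH] a /=; first by split=> // -[]; lia.
case: ifP => Pa /=.
  split=> [[<-]|[ak Pk minP]]; first by split=> //; [lia | move=> x; lia].
  case: (ltngtP a k) => [lt_ak|lt_ka|-> //]; last lia.
  by move: (minP a); rewrite leqnn lt_ak Pa => /(_ isT).
rewrite IH; split=> -[ak Pk minP]; split=> //; try lia.
- move=> x ax; have [->|] := eqVneq x a; [by rewrite Pa | move=> ?; apply: minP; lia].
- by have [eka|] := eqVneq k a; [move: Pa; rewrite -eka Pk | lia].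
- move=> x ax; apply: minP; lia.
Qed.

Lemma has_card_image (T U : eqType) (P : pred T) (Q : pred U) (f : T -> U) c :
  {in P &, injective f} -> (forall x, P x -> Q (f x)) ->
  (forall y, Q y -> exists2 x, P x & f x = y) -> has_card P c -> has_card Q c.
Proof.
move=> f_inj f_maps f_onto [s [uniq_s sE <-]]; exists (map f s); split.
- by rewrite map_inj_in_uniq // => x y; rewrite !sE; apply: f_inj.
- move=> y; apply/mapP/idP => [[x] | /f_onto[x Px <-]].
    by rewrite sE => /f_maps Qfx ->.
  by exists x; rewrite ?sE.
- by rewrite size_map.
Qed.

Section Parking.

Variable n : nat.

Lemma first_free_prefix occ i a :
  occ =i iota 1 i -> 0 < a <= i.+1 -> i < n -> first_free n occ a = Some i.+1.
Proof.
move=> occE a_le i_lt; apply/ohead_filter_iota.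
rewrite occE mem_iota; split; [lia | lia | move=> x ax].
by rewrite occE mem_iota negbK; lia.
Qed.

Lemma park_aux_spots occ q o : park_aux n occ q = Some o ->
  [/\ size o = size q, uniq o, all [pred k | k \notin occ] o &
      forall c, all (leq c) q -> all (fun k => c <= k <= n) o].
Proof.
elim: q occ o => [|a q IH] occ o /=; first by move=> [<-].
case E: (first_free n occ a) => [k|] //.
case: (park_aux n (k :: occ) q) (IH (k :: occ)) => [o'|] //.
move=> /(_ o' erefl) [szo uo' fresh rng] [<-].
have /ohead_filter_iota [ak k_free _] := E.
split=> /=; first by rewrite szo.
- by rewrite uo' andbT; apply/negP => /(allP fresh) /=; rewrite inE eqxx.
- by rewrite k_free; apply: sub_all fresh => x; rewrite inE negb_or => /andP[].
- move=> c /andP[ca cq]; rewrite rng // andbT; lia.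
Qed.

Lemma park_sorted_head_le occ i a q o :
  i + size (a :: q) = n -> sorted leq (a :: q) -> park_aux n occ (a :: q) = Some o ->
  a <= i.+1.
Proof.
move=> sz_q sorted_q /park_aux_spots [szo uo _ /(_ a)].
(* The [n - i] cars take distinct spots in [[a, n]]. *)
rewrite /= leqnn (order_path_min leq_trans sorted_q) => /(_ isT) rng.
have : size o <= size (iota a (n.+1 - a)).
  by apply: uniq_leq_size uo _ => x /(allP rng); rewrite mem_iota; lia.
rewrite size_iota szo /=; move: sz_q => /=; lia.
Qed.

Lemma park_sorted_unit_prefs occ i q o :
  occ =i iota 1 i -> i + size q = n -> sorted leq q -> all (leq 1) q ->
  park_aux n occ q = Some o -> all (fun op => op.1 - op.2 <= 1) (zip o q) ->
  forall j, j < size q -> i + j <= nth 0 q j <= (i + j).+1.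
Proof.
elim: q i occ o => [|a q IH] // i occ o occE sz_q sorted_q /andP[a_gt0 q_gt0] park_q.
have a_le := park_sorted_head_le sz_q sorted_q park_q.
move: park_q => /=; rewrite (first_free_prefix occE) ?a_gt0 //=; last by move: sz_q => /=; lia.
case E: (park_aux n (i.+1 :: occ) q) => [o'|] // [<-] /= /andP[disp_a disp_q] [|j] j_lt /=.
  lia.
have occE' : i.+1 :: occ =i iota 1 i.+1.
  by move=> x; rewrite in_cons occE !mem_iota; lia.
have sz_q' : i.+1 + size q = n by move: sz_q => /=; lia.
have := IH _ _ _ occE' sz_q' (path_sorted sorted_q) q_gt0 E disp_q j j_lt; lia.
Qed.

End Parking.

(* Car [j.+1] prefers spot [j.+1 - b_j]; it will park in spot [j.+1], so [b_j]
   is its displacement. *)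
Definition pref_of_bits (b : seq bool) (i m : nat) : seq nat :=
  [seq j.+1 - nth false b j | j <- iota i m].

Definition is_disp_code (n : nat) (b : seq bool) : bool :=
  (size b == n) && ~~ nth false b 0.

Lemma size_disp_code n b : is_disp_code n b -> size b = n.
Proof. by case/andP => /eqP. Qed.

Section PrefOfBits.

Variable b : seq bool.

Lemma park_pref_of_bits n occ i m : ~~ nth false b 0 ->
  occ =i iota 1 i -> i + m = n -> park_aux n occ (pref_of_bits b i m) = Some (iota i.+1 m).
Proof.
move=> b0; elim: m i occ => [|m IH] i occ occE sz_m //=.
have pref_gt0 : 0 < i.+1 - nth false b i
  by case: i {occE sz_m} => [|i]; [rewrite (negbTE b0) | case: nth].
rewrite (first_free_prefix occE) /=; [|lia|lia].
rewrite (IH i.+1) // => [x|]; [by rewrite in_cons occE !mem_iota; lia | lia].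
Qed.

Lemma unit_disp_pref_of_bits i m :
  all (fun op => op.1 - op.2 <= 1) (zip (iota i.+1 m) (pref_of_bits b i m)).
Proof. by elim: m i => [|m IH] i //=; rewrite IH andbT; case: nth; lia. Qed.

Lemma path_pref_of_bits i m x : x <= i -> path leq x (pref_of_bits b i m).
Proof. by elim: m i x => [|m IH] i x x_le //=; rewrite IH; case: nth => /=; lia. Qed.

Lemma is_UPF_inc_pref_of_bits n : is_disp_code n b -> is_UPF_inc n (pref_of_bits b 0 n).
Proof.
case/andP => /eqP sz_b b0; apply/andP; split; last first.
  by case: n {sz_b} => [|n] //=; rewrite path_pref_of_bits // (negbTE b0).
apply/andP; split; last first.
  by rewrite /outcome (@park_pref_of_bits n _ 0) //; exact: unit_disp_pref_of_bits.
apply/andP; split; first by rewrite size_map size_iota.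
apply/allP => x /mapP[j]; rewrite mem_iota => j_lt ->.
by case: j j_lt => [|j] j_lt /=; [rewrite (negbTE b0) | case: nth]; lia.
Qed.

Lemma count_pref_of_bits n i : size b = n -> i < n ->
  count_mem i.+1 (pref_of_bits b 0 n) = nth false b i.+1 + ~~ nth false b i.
Proof.
move=> sz_b i_lt; rewrite count_map.
pose at_i := fun j => (j == i) && ~~ nth false b i.
pose at_Si := fun j => (j == i.+1) && nth false b i.+1.
have count_at a c : count (fun j => (j == a) && c) (iota 0 n) = (a < n) && c.
  case: c; last by rewrite andbF (eq_count (a2 := pred0)) ?count_pred0 // => j; rewrite andbF.
  rewrite andbT (eq_count (a2 := pred1 a)) => [|j]; last by rewrite andbT.
  by rewrite count_uniq_mem ?iota_uniq // mem_iota.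
have -> : count (preim (fun j => j.+1 - nth false b j) (pred1 i.+1)) (iota 0 n) =
          count (predU at_i at_Si) (iota 0 n).
  apply: eq_count => j /=; rewrite /at_i /at_Si.
  have [->|ne_ji] := eqVneq j i; first by case: nth; rewrite /= ?andbF; lia.
  by have [->|ne_jSi] := eqVneq j i.+1; case: nth; lia.
have disjoint : count (predI at_i at_Si) (iota 0 n) = 0.
  rewrite (eq_count (a2 := pred0)) ?count_pred0 // => j /=.
  by rewrite /at_i /at_Si /=; case: (nth false b i); case: (nth false b i.+1); lia.
have := count_predUI at_i at_Si (iota 0 n).
rewrite disjoint addn0 => ->; rewrite !count_at i_lt /= addnC.
by case: (ltnP i.+1 n) => // i_ge; rewrite nth_default ?sz_b.
Qed.

End PrefOfBits.

Lemma UPF_inc_disp_code n p :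
  is_UPF_inc n p -> exists2 b, is_disp_code n b & p = pref_of_bits b 0 n.
Proof.
case/andP => /andP[/andP[/eqP sz_p prefs_p] park_p] sorted_p.
case E: (outcome n p) park_p => [o|] // disp_p.
have p_gt0 : all (leq 1) p by apply: sub_all prefs_p => x /andP[].
have bounds j : j < n -> j <= nth 0 p j <= j.+1.
  by move=> j_lt; apply: (@park_sorted_unit_prefs n [::] 0 p o); rewrite ?sz_p.
exists (mkseq (fun j => nth 0 p j == j) n).
  rewrite /is_disp_code size_mkseq eqxx /=.
  case: (posnP n) => [-> // | n_gt0]; rewrite nth_mkseq // -lt0n.
  by apply/(allP p_gt0)/mem_nth; rewrite sz_p.
apply: (@eq_from_nth _ 0) => [|j]; first by rewrite size_map size_iota.
rewrite sz_p => j_lt; rewrite (nth_map 0) ?size_iota // nth_iota // add0n nth_mkseq //.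
by have := bounds j j_lt; case: eqP => /=; lia.
Qed.

Lemma has_card_disp_code n : 0 < n -> has_card (is_disp_code n) (2 ^ (n - 1)).
Proof.
move=> n_gt0; exists [seq false :: val t | t <- enum {: (n - 1).-tuple bool}]; split.
- by rewrite map_inj_uniq ?enum_uniq // => t1 t2 [] /val_inj.
- move=> b; apply/mapP/andP => [[t _ ->] | [/eqP sz_b]].
    by rewrite /= size_tuple; split=> //; apply/eqP; lia.
  case: b sz_b => [|c b] /= sz_b; first lia.
  move/negbTE->; have sz : size b == n - 1 by rewrite -sz_b subn1.
  by exists (Tuple sz); rewrite ?mem_enum.
- by rewrite size_map -cardT card_tuple card_bool.
Qed.

Section Paths.

Local Open Scope ring_scope.

Definition bitz (b : seq bool) (i : nat) : int := (nth false b i : nat)%:Z.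

(* [nth] reads [false] past the end of [b], so for [size b = n] the last step
   is [- b_(n-1)] and the path returns to height [0]. *)
Definition path_of_bits (b : seq bool) (n : nat) : seq int :=
  [seq bitz b i.+1 - bitz b i | i <- iota 0 n].

Lemma Psi_pref_of_bits b n : size b = n -> Psi n (pref_of_bits b 0 n) = path_of_bits b n.
Proof.
move=> sz_b; rewrite /Psi -[iota 1 n]/(iota (1 + 0) n) iotaDl -map_comp.
apply/eq_in_map => i; rewrite mem_iota /= => i_lt.
by rewrite add1n count_pref_of_bits // /bitz; case: nth; case: nth.
Qed.

Lemma height0 (l : seq int) : height l 0 = 0.
Proof. by rewrite /height take0 big_nil. Qed.

Lemma heightS (l : seq int) k : (k < size l)%N -> height l k.+1 = height l k + nth 0 l k.
Proof. by move=> k_lt; rewrite /height (take_nth 0) // -cats1 big_cat big_seq1. Qed.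

Lemma height_path_of_bits b n k : (k <= n)%N ->
  height (path_of_bits b n) k = bitz b k - bitz b 0.
Proof.
move=> k_le; rewrite /height -map_take take_iota (minn_idPl k_le) big_map.
by rewrite -telescope_sumr // /index_iota subn0.
Qed.

Lemma is_Motz_le1_path_of_bits n b : is_disp_code n b -> is_Motz_le1 n (path_of_bits b n).
Proof.
case/andP => /eqP sz_b /negbTE b0.
have heightE k : (k <= n)%N -> height (path_of_bits b n) k = bitz b k.
  by move=> k_le; rewrite height_path_of_bits // /bitz b0 subr0.
have step_bounds x : x \in path_of_bits b n -> -1 <= x <= 1.
  by case/mapP => i _ ->; rewrite /bitz; case: nth; case: nth.
rewrite /is_Motz_le1 /is_Motz /is_Luk size_map size_iota eqxx /= -!andbA.
apply/and5P; split.
- by apply/allP => x /step_bounds /andP[].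
- by apply/allP => k; rewrite mem_iota => k_in; rewrite heightE; [|lia].
- by rewrite heightE // /bitz nth_default ?sz_b.
- by apply/allP => x /step_bounds /andP[].
- by apply/allP => k; rewrite mem_iota => k_in; rewrite heightE /bitz; [case: nth | lia].
Qed.

Lemma Motz_le1_path_of_bits n l :
  is_Motz_le1 n l -> exists2 b, is_disp_code n b & l = path_of_bits b n.
Proof.
case/andP => /andP[/and4P[/eqP sz_l _ h_ge0 /eqP h_n] _] h_le1.
set b := mkseq (fun k => height l k == 1) n.
have bitzE k : (k <= n)%N -> bitz b k = height l k.
  move=> k_le; rewrite /bitz; case: (ltnP k n) => [k_lt | k_ge]; last first.
    by rewrite nth_default ?size_mkseq // (_ : k = n) ?h_n //; lia.
  have : 0 <= height l k <= 1.
    case: k k_le k_lt => [|k] k_le k_lt; first by rewrite height0.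
    by rewrite (allP h_ge0) ?(allP h_le1) // mem_iota; lia.
  by rewrite nth_mkseq //; case: eqP => [->|] //=; lia.
exists b.
  rewrite /is_disp_code size_mkseq eqxx /=.
  by have := bitzE 0%N (leq0n n); rewrite height0 /bitz; case: nth.
apply: (@eq_from_nth _ 0) => [|j]; first by rewrite size_map size_iota.
rewrite sz_l => j_lt; rewrite (nth_map 0%N) ?size_iota // nth_iota // add0n.
by rewrite !bitzE ?(ltnW j_lt) // heightS ?sz_l // addrAC subrr add0r.
Qed.

Lemma path_of_bits_inj n : {in is_disp_code n &, injective (path_of_bits^~ n)}.
Proof.
move=> b1 b2 /andP[/eqP sz1 /negbTE b10] /andP[/eqP sz2 /negbTE b20] eq_path.
apply: (@eq_from_nth _ false) => [|k]; first by rewrite sz1 sz2.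
rewrite sz1 => k_lt; have := congr1 (height^~ k) eq_path.
rewrite !height_path_of_bits ?(ltnW k_lt) // /bitz b10 b20.
by case: (nth false b1 k); case: (nth false b2 k).
Qed.

End Paths.

Lemma is_Motz_le1_Psi n p : is_UPF_inc n p -> is_Motz_le1 n (Psi n p).
Proof.
case/UPF_inc_disp_code => b code_b ->.
by rewrite Psi_pref_of_bits ?is_Motz_le1_path_of_bits ?(size_disp_code code_b).
Qed.

Lemma Psi_inj n : {in is_UPF_inc n &, injective (Psi n)}.
Proof.
move=> _ _ /UPF_inc_disp_code[b1 code_b1 ->] /UPF_inc_disp_code[b2 code_b2 ->].
rewrite !Psi_pref_of_bits ?(size_disp_code code_b1) ?(size_disp_code code_b2) //.
by move/path_of_bits_inj => ->.
Qed.

Lemma Psi_onto n l : is_Motz_le1 n l -> exists2 p, is_UPF_inc n p & Psi n p = l.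
Proof.
case/Motz_le1_path_of_bits => b code_b ->; exists (pref_of_bits b 0 n).
  exact: is_UPF_inc_pref_of_bits.
exact/Psi_pref_of_bits/size_disp_code.
Qed.

Lemma has_card_UPF_inc n : 0 < n -> has_card (is_UPF_inc n) (2 ^ (n - 1)).
Proof.
move/has_card_disp_code; apply: (has_card_image (f := fun b => pref_of_bits b 0 n)).
- move=> b1 b2 code_b1 code_b2 /(congr1 (Psi n)).
  rewrite !Psi_pref_of_bits ?(size_disp_code code_b1) ?(size_disp_code code_b2) //.
  exact: path_of_bits_inj.
- by move=> b; apply: is_UPF_inc_pref_of_bits.
- by move=> p /UPF_inc_disp_code[b code_b ->]; exists b.
Qed.

Theorem theorem3p2 (n : nat) : (0 < n)%N ->
  [/\ (forall p, is_UPF_inc n p -> is_Motz_le1 n (Psi n p)),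
      {in is_UPF_inc n &, injective (Psi n)},
      (forall l, is_Motz_le1 n l -> exists2 p, is_UPF_inc n p & Psi n p = l),
      has_card (is_UPF_inc n) (2 ^ (n - 1))
    & has_card (is_Motz_le1 n) (2 ^ (n - 1))].
Proof.
move/has_card_UPF_inc => card_UPF; split.
- exact: is_Motz_le1_Psi.
- exact: Psi_inj.
- exact: Psi_onto.
- exact: card_UPF.
- exact: has_card_image (@Psi_inj n) (@is_Motz_le1_Psi n) (@Psi_onto n) card_UPF.
Qed.
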